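(* Consider a finite reward-free MDP with occupancy polytope $\Phi$, let $d_e^\star\in\Phi$ be the occupancy measure of an optimal demonstrator, let $\delta\ge0$, and let $\mathcal D=\{(d_e^k,\epsilon^k)\}_{k=1}^K$ be a dataset with $d_e^k\in\Phi$, $\epsilon^k\ge0$ and $\mathcal R(\mathcal D)\ne\emptyset$. Suppose that for every $\tilde r\in\Delta(S\times A)$ with $\mathrm{subopt}(\tilde r,d_e^\star)>\delta$ there exist $r'\in\mathcal R(d_e^\star)$ and $k\in[K]$ such that \[ (\tilde r-r')^\top(d_e^\star-d_e^k)>0\quad\text{and}\quad\mathrm{subopt}(r',d_e^k)\in[\epsilon^k-\delta,\epsilon^k]. \] Then $\mathrm{Gap}(\mathcal R(\mathcal D),\mathcal R(d_e^\star))\le\delta$.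
   Context: The MDP has finite $S$, $A$, transitions $P$, initial distribution $\mu_0$, discount $\gamma\in(0,1)$; $(Md)(s)=\sum_a d(s,a)-\gamma\sum_{s',a'}P(s\mid s',a')d(s',a')$ and $\Phi=\{d\ge0:Md=(1-\gamma)\mu_0\}$. Rewards are $r\in\Delta(S\times A)$. $\mathrm{subopt}(r,d):=\max_{\tilde d\in\Phi}r^\top\tilde d-r^\top d$. $\mathcal R(\mathcal D):=\{r\in\Delta(S\times A):\mathrm{subopt}(r,d_e^k)\le\epsilon^k\ \forall k\}$; $\mathcal R(d_e^\star):=\{r\in\Delta(S\times A):\mathrm{subopt}(r,d_e^\star)=0\}$. $\mathrm{Gap}(\mathcal R,\mathcal R(d_e^\star)):=\max_{r\in\mathcal R}\mathrm{subopt}(r,d_e^\star)$. *)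

From HB Require Import structures.
From mathcomp Require Import all_boot all_order all_algebra.
From mathcomp Require Import boolp classical_sets reals.
Set Implicit Arguments. Unset Strict Implicit. Unset Printing Implicit Defensive.
Import Order.TTheory GRing.Theory Num.Theory.
Local Open Scope ring_scope.
Local Open Scope classical_set_scope.

Section MDP.
Variables (R : realType) (S A : finType).

(* P s' a' s = P(s | s', a') *)
Definition is_kernel (P : S -> A -> S -> R) : Prop :=
  forall s' a', (forall s, 0 <= P s' a' s) /\ \sum_s P s' a' s = 1.

Definition is_distr_S (mu : S -> R) : Prop :=
  (forall s, 0 <= mu s) /\ \sum_s mu s = 1.

Definition is_reward (r : S -> A -> R) : Prop :=
  (forall s a, 0 <= r s a) /\ \sum_s \sum_a r s a = 1.

Definition Mop (P : S -> A -> S -> R) (gamma : R) (d : S -> A -> R) (s : S) : R :=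
  \sum_a d s a - gamma * \sum_s' \sum_a' P s' a' s * d s' a'.

Definition Phi (P : S -> A -> S -> R) (gamma : R) (mu0 : S -> R) (d : S -> A -> R) : Prop :=
  (forall s a, 0 <= d s a) /\ forall s, Mop P gamma d s = (1 - gamma) * mu0 s.

Definition dotp (r d : S -> A -> R) : R := \sum_s \sum_a r s a * d s a.

(* max_{d in Phi} r^T d, written as a supremum *)
Definition optval P gamma mu0 (r : S -> A -> R) : R :=
  sup [set x | exists2 d, Phi P gamma mu0 d & x = dotp r d].

Definition subopt P gamma mu0 (r d : S -> A -> R) : R :=
  optval P gamma mu0 r - dotp r d.

Definition RD P gamma mu0 (K : nat) (de : 'I_K -> S -> A -> R) (eps : 'I_K -> R) :
  set (S -> A -> R) :=
  [set r | is_reward r /\ forall k, subopt P gamma mu0 r (de k) <= eps k].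

Definition Rstar P gamma mu0 (dstar : S -> A -> R) : set (S -> A -> R) :=
  [set r | is_reward r /\ subopt P gamma mu0 r dstar = 0].

Definition Gap P gamma mu0 (Rset : set (S -> A -> R)) (dstar : S -> A -> R) : R :=
  sup [set x | exists2 r, Rset r & x = subopt P gamma mu0 r dstar].

End MDP.

From HB Require Import structures.
From mathcomp Require Import all_boot all_order all_algebra.
From mathcomp Require Import boolp classical_sets reals.
From mathcomp Require Import lra.
Import Order.TTheory GRing.Theory Num.Theory.
Local Open Scope ring_scope.
Local Open Scope classical_set_scope.

(* If [r] had suboptimality above [delta] at [dstar] while staying [eps k]-close
   to optimal at [de k], then against the expert-optimal [r'] the two
   suboptimality gaps force [(r - r')^T (dstar - de k) < 0], contradicting the
   separation hypothesis.  The optimal value [optval r] cancels from every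
   difference of suboptimalities, so no property of the MDP is needed. *)

Section Suboptimality.
Context {R : realType} {S A : finType}.
Context {P : S -> A -> S -> R} {gamma : R} {mu0 : S -> R}.

Lemma dotpBB (r1 r2 d1 d2 : S -> A -> R) :
  dotp (fun s a => r1 s a - r2 s a) (fun s a => d1 s a - d2 s a) =
  dotp r1 d1 - dotp r1 d2 - (dotp r2 d1 - dotp r2 d2).
Proof.
rewrite /dotp -!sumrB; apply: eq_bigr => s _; rewrite -!sumrB.
by apply: eq_bigr => a _; rewrite mulrBl !mulrBr.
Qed.

Lemma dotpBB_subopt (r1 r2 d1 d2 : S -> A -> R) :
  dotp (fun s a => r1 s a - r2 s a) (fun s a => d1 s a - d2 s a) =
  (subopt P gamma mu0 r1 d2 - subopt P gamma mu0 r1 d1)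
  - (subopt P gamma mu0 r2 d2 - subopt P gamma mu0 r2 d1).
Proof. by rewrite dotpBB /subopt; lra. Qed.

Lemma subopt_lt_of_separated {r r' d d' : S -> A -> R} {eps delta : R} :
  subopt P gamma mu0 r' d = 0 ->
  eps - delta <= subopt P gamma mu0 r' d' ->
  subopt P gamma mu0 r d' <= eps ->
  0 < dotp (fun s a => r s a - r' s a) (fun s a => d s a - d' s a) ->
  subopt P gamma mu0 r d < delta.
Proof. by rewrite dotpBB_subopt; lra. Qed.

Lemma Gap_le (Rset : set (S -> A -> R)) (dstar : S -> A -> R) (delta : R) :
  Rset !=set0 ->
  (forall r, Rset r -> subopt P gamma mu0 r dstar <= delta) ->
  Gap P gamma mu0 Rset dstar <= delta.
Proof.
move=> [r0 Rr0] Rset_le; apply: ge_sup => [|_ [r Rr ->]]; last exact: Rset_le.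
by exists (subopt P gamma mu0 r0 dstar), r0.
Qed.

End Suboptimality.

Theorem mainTheorem3 (R : realType) (S A : finType)
  (P : S -> A -> S -> R) (mu0 : S -> R) (gamma : R)
  (hP : is_kernel P) (hmu0 : is_distr_S mu0)
  (hg0 : 0 < gamma) (hg1 : gamma < 1)
  (dstar : S -> A -> R) (hdstar : Phi P gamma mu0 dstar)
  (delta : R) (hdelta : 0 <= delta)
  (K : nat) (de : 'I_K -> S -> A -> R) (eps : 'I_K -> R)
  (hde : forall k, Phi P gamma mu0 (de k))
  (heps : forall k, 0 <= eps k)
  (hRD : RD P gamma mu0 de eps !=set0)
  (hcond : forall rt : S -> A -> R, is_reward rt ->
     subopt P gamma mu0 rt dstar > delta ->
     exists r', Rstar P gamma mu0 dstar r' /\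
       exists k : 'I_K,
         dotp (fun s a => rt s a - r' s a) (fun s a => dstar s a - de k s a) > 0 /\
         eps k - delta <= subopt P gamma mu0 r' (de k) <= eps k) :
  Gap P gamma mu0 (RD P gamma mu0 de eps) dstar <= delta.
Proof.
apply: Gap_le => // r [r_reward r_close]; rewrite leNgt; apply/negP => r_far.
have [r' [[_ r'_opt] [k [separated /andP [r'_lb _]]]]] := hcond r r_reward r_far.
have := subopt_lt_of_separated r'_opt r'_lb (r_close k) separated.
by rewrite ltNge (ltW r_far).
Qed.
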